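(* Let $d>1$ be an integer and $\mu>0$. Let $A,B$ be sequences of non-negative integers bounded by $\mu$ with $\mathrm{DS}(A,d)<\mathrm{DS}(B,d)$. Then there exist integer sequences $C$ and $X$ such that $A[0]+C[0]+X[0]=B[0]$ and $A[i]+C[i]+X[i]=B[i]+d\cdot X[i-1]$ for all $i\ge1$, and moreover $0\le C[0]\le \mu\cdot\frac{d}{d-1}$, $0\le C[i]<d$ for all $i\ge1$, and $|X[i]|\le 1+\frac{\mu}{d-1}$ for all $i\ge0$.
   Context: $\mathrm{DS}(A,d)=\sum_{i\ge0}A[i]/d^i$. *)

From Stdlib Require Import Reals Lra Lia ZArith ClassicalEpsilon.
Open Scope R_scope.

Definition DS_term (A : nat -> nat) (d : nat) (i : nat) : R :=
  INR (A i) / INR d ^ i.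

(* DS(A,d) = sum_{i>=0} A[i]/d^i, defined as the (chosen) limit of the series.
   When the series converges (e.g. A bounded and d > 1) this is its sum,
   by uniqueness of limits. *)
Definition DS (A : nat -> nat) (d : nat) : R :=
  epsilon (inhabits 0) (fun l => infinite_sum (DS_term A d) l).

(* Put D := DS(B,d) - DS(A,d) > 0 and P_i := sum_{j<=i} (B[j] - A[j]) d^(i-j), which is
   d^i times the i-th partial sum of the series of D, hence an integer.  Take for C the
   base-d digits of D, C[0] = floor D and C[i] = floor (d^i D) - d floor (d^(i-1) D), and
   for X the carries X[i] := P_i - floor (d^i D).  The carry equations are then an identity
   and the digits lie in [0, d); since the tail of the series beyond i is at most
   mu / ((d-1) d^i), we get |d^i D - P_i| <= mu / (d-1), which bounds both X[i] and C[0]. *)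
From Stdlib Require Import Reals ZArith.
From Stdlib Require Import Lra Lia ClassicalEpsilon.
Open Scope R_scope.

Lemma infinite_sum_minus (a b : nat -> R) (la lb : R) :
  infinite_sum a la -> infinite_sum b lb ->
  infinite_sum (fun j => a j - b j) (la - lb).
Proof.
  intros Ha Hb e He.
  destruct (CV_minus _ _ _ _ Ha Hb e He) as [N HN].
  exists N; intros n Hn; rewrite minus_sum; exact (HN n Hn).
Qed.

Lemma infinite_sum_geometric (M q : R) :
  Rabs q < 1 -> infinite_sum (fun j => M * q ^ j) (M / (1 - q)).
Proof.
  intros Hq e He.
  assert (Hconst : Un_cv (fun _ : nat => M) M).
  { intros e' He'; exists 0%nat; intros; unfold R_dist; rewrite Rminus_diag, Rabs_R0; lra. }
  destruct (CV_mult _ _ _ _ Hconst (GP_infinite q Hq) e He) as [N HN].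
  exists N; intros n Hn.
  replace (sum_f_R0 (fun j => M * q ^ j) n) with (M * sum_f_R0 (fun j => 1 * q ^ j) n).
  - exact (HN n Hn).
  - rewrite scal_sum; apply sum_eq; intros; ring.
Qed.

Lemma Rabs_inv_lt_1 (r : R) : 1 < r -> Rabs (/ r) < 1.
Proof.
  intro Hr; rewrite Rabs_right by (left; apply Rinv_0_lt_compat; lra).
  rewrite <- Rinv_1; apply Rinv_lt_contravar; lra.
Qed.

Lemma geometric_tail_bound (a : nat -> R) (r M l : R) (n : nat) :
  1 < r -> (forall j, Rabs (a j) <= M / r ^ j) -> infinite_sum a l ->
  Rabs (l - sum_f_R0 a n) <= M / ((r - 1) * r ^ n).
Proof.
  intros Hr Ha Hl.
  assert (Hq : Rabs (/ r) < 1) by (apply Rabs_inv_lt_1; exact Hr).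
  assert (Hmaj : forall j, Rabs (a j) <= M * (/ r) ^ j).
  { intro j; rewrite pow_inv; exact (Ha j). }
  pose proof (sum_maj1 (fun j _ => a j) _ 0 l _ n Hl
                (infinite_sum_geometric M (/ r) Hq) (fun j => Hmaj j)) as Htail.
  unfold SP in Htail.
  replace (sum_f_R0 (fun j => M * (/ r) ^ j) n)
    with (M * sum_f_R0 (fun j => (/ r) ^ j) n) in Htail
    by (rewrite scal_sum; apply sum_eq; intros; ring).
  rewrite tech3 in Htail by (intro H; apply (f_equal Rinv) in H;
                             rewrite Rinv_inv, Rinv_1 in H; lra).
  assert (Hpow : 0 < r ^ n) by (apply pow_lt; lra).
  replace (M / ((r - 1) * r ^ n))
    with (M / (1 - / r) - M * ((1 - (/ r) ^ S n) / (1 - / r))).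
  - exact Htail.
  - rewrite pow_inv; simpl; field; lra.
Qed.

Lemma DS_term_bound (A : nat -> nat) (d : nat) (mu : R) (j : nat) :
  (0 < d)%nat -> (forall i, INR (A i) <= mu) ->
  0 <= DS_term A d j <= mu / INR d ^ j.
Proof.
  intros Hd HA.
  assert (Hpow : 0 < INR d ^ j) by (apply pow_lt, lt_0_INR; lia).
  unfold DS_term, Rdiv; split.
  - apply Rmult_le_pos; [apply pos_INR | left; apply Rinv_0_lt_compat, Hpow].
  - apply Rmult_le_compat_r; [left; apply Rinv_0_lt_compat, Hpow | apply HA].
Qed.

Lemma infinite_sum_DS (A : nat -> nat) (d : nat) (mu : R) :
  (1 < d)%nat -> (forall i, INR (A i) <= mu) ->
  infinite_sum (DS_term A d) (DS A d).
Proof.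
  intros Hd HA; unfold DS; apply epsilon_spec.
  assert (HdR : 1 < INR d) by (apply lt_1_INR; lia).
  assert (Hq : Rabs (/ INR d) < 1) by (apply Rabs_inv_lt_1; exact HdR).
  destruct (Rseries_CV_comp (DS_term A d) (fun j => mu * (/ INR d) ^ j)) as [l Hl].
  - intro j; rewrite pow_inv; apply DS_term_bound; [lia | exact HA].
  - exists (mu / (1 - / INR d)); exact (infinite_sum_geometric mu _ Hq).
  - exists l; exact Hl.
Qed.

Fixpoint horner_diff (A B : nat -> nat) (d i : nat) : Z :=
  match i with
  | O => (Z.of_nat (B 0%nat) - Z.of_nat (A 0%nat))%Z
  | S k => (Z.of_nat d * horner_diff A B d k + Z.of_nat (B (S k)) - Z.of_nat (A (S k)))%Z
  end.

Lemma IZR_horner_diff (A B : nat -> nat) (d i : nat) :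
  (0 < d)%nat ->
  IZR (horner_diff A B d i)
  = INR d ^ i * sum_f_R0 (fun j => DS_term B d j - DS_term A d j) i.
Proof.
  intro Hd.
  assert (HdR : 0 < INR d) by (apply lt_0_INR; lia).
  induction i as [|i IH]; cbn [horner_diff sum_f_R0];
    rewrite ?minus_IZR, ?plus_IZR, ?mult_IZR, <- !INR_IZR_INZ.
  - unfold DS_term; simpl; field.
  - rewrite IH; unfold DS_term; simpl.
    assert (0 < INR d ^ i) by (apply pow_lt; lra).
    field; lra.
Qed.

Lemma Int_part_mul_nat_bounds (n : nat) (y : R) :
  (0 < n)%nat ->
  (0 <= Int_part (INR n * y) - Z.of_nat n * Int_part y < Z.of_nat n)%Z.
Proof.
  intro Hn.
  destruct (base_Int_part y) as [Hy1 Hy2].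
  destruct (base_Int_part (INR n * y)) as [Hny1 Hny2].
  assert (HnR : 1 <= INR n) by (apply (le_INR 1); lia).
  rewrite INR_IZR_INZ in *.
  assert (Hlo : IZR (Z.of_nat n * Int_part y)
                < IZR (Int_part (IZR (Z.of_nat n) * y) + 1)) by (rewrite plus_IZR, mult_IZR; nra).
  assert (Hhi : IZR (Int_part (IZR (Z.of_nat n) * y))
                < IZR (Z.of_nat n * Int_part y + Z.of_nat n)) by (rewrite plus_IZR, mult_IZR; nra).
  apply lt_IZR in Hlo, Hhi; lia.
Qed.

Lemma Rabs_IZR_sub_Int_part (z : Z) (x e : R) :
  Rabs (IZR z - x) <= e -> Rabs (IZR (z - Int_part x)) <= 1 + e.
Proof.
  intro H; destruct (base_Int_part x) as [H1 H2].
  pose proof (Rle_abs (IZR z - x)); pose proof (Rle_abs (- (IZR z - x))).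
  rewrite Rabs_Ropp in *; rewrite minus_IZR; apply Rabs_le; lra.
Qed.

Lemma horner_diff_approx (A B : nat -> nat) (d : nat) (mu : R) (i : nat) :
  (1 < d)%nat -> (forall i, INR (A i) <= mu) -> (forall i, INR (B i) <= mu) ->
  Rabs (IZR (horner_diff A B d i) - INR d ^ i * (DS B d - DS A d)) <= mu / (INR d - 1).
Proof.
  intros Hd HA HB.
  assert (HdR : 1 < INR d) by (apply lt_1_INR; lia).
  assert (Hpow : 0 < INR d ^ i) by (apply pow_lt; lra).
  rewrite IZR_horner_diff by lia.
  rewrite <- Rmult_minus_distr_l, Rabs_mult, Rabs_right, Rabs_minus_sym by lra.
  replace (mu / (INR d - 1)) with (INR d ^ i * (mu / ((INR d - 1) * INR d ^ i)))
    by (field; lra).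
  apply Rmult_le_compat_l; [lra|].
  apply geometric_tail_bound; [exact HdR | | ].
  - intro j; pose proof (DS_term_bound A d mu j ltac:(lia) HA).
    pose proof (DS_term_bound B d mu j ltac:(lia) HB).
    apply Rabs_le; lra.
  - apply infinite_sum_minus; eapply infinite_sum_DS; eauto.
Qed.

Lemma Int_part_DS_diff_bounds (A B : nat -> nat) (d : nat) (mu : R) :
  (1 < d)%nat -> (forall i, INR (A i) <= mu) -> (forall i, INR (B i) <= mu) ->
  DS A d < DS B d ->
  0 <= IZR (Int_part (DS B d - DS A d)) <= mu * (INR d / (INR d - 1)).
Proof.
  intros Hd HA HB HDS.
  assert (HdR : 1 < INR d) by (apply lt_1_INR; lia).
  pose proof (horner_diff_approx A B d mu 0 Hd HA HB) as T0; simpl in T0.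
  rewrite minus_IZR, <- !INR_IZR_INZ, Rmult_1_l, Rabs_minus_sym in T0.
  pose proof (Rle_abs (DS B d - DS A d - (INR (B 0%nat) - INR (A 0%nat)))).
  pose proof (HB 0%nat); pose proof (pos_INR (A 0%nat)).
  destruct (base_Int_part (DS B d - DS A d)) as [HF1 HF2].
  assert (HF0 : (-1 < Int_part (DS B d - DS A d))%Z) by (apply lt_IZR; lra).
  split; [apply IZR_le; lia|].
  replace (mu * (INR d / (INR d - 1))) with (mu + mu / (INR d - 1)) by (field; lra).
  lra.
Qed.

Theorem corollary10 (d : nat) (mu : R) (A B : nat -> nat) :
  (1 < d)%nat -> 0 < mu ->
  (forall i, INR (A i) <= mu) -> (forall i, INR (B i) <= mu) ->
  DS A d < DS B d ->
  exists (C X : nat -> Z),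
    (Z.of_nat (A 0%nat) + C 0%nat + X 0%nat = Z.of_nat (B 0%nat))%Z /\
    (forall i, (1 <= i)%nat ->
       (Z.of_nat (A i) + C i + X i = Z.of_nat (B i) + Z.of_nat d * X (i - 1)%nat)%Z) /\
    (0 <= IZR (C 0%nat) <= mu * (INR d / (INR d - 1))) /\
    (forall i, (1 <= i)%nat -> (0 <= C i)%Z /\ (C i < Z.of_nat d)%Z) /\
    (forall i, Rabs (IZR (X i)) <= 1 + mu / (INR d - 1)).
Proof.
  intros Hd _ HA HB HDS.
  set (F := fun i => Int_part (INR d ^ i * (DS B d - DS A d))).
  exists (fun i => match i with O => F O | S k => (F (S k) - Z.of_nat d * F k)%Z end).
  exists (fun i => (horner_diff A B d i - F i)%Z).
  split; [|split; [|split; [|split]]].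
  - simpl; lia.
  - intros [|k] Hk; [lia|]; replace (S k - 1)%nat with k by lia; simpl; ring.
  - unfold F; simpl; rewrite Rmult_1_l; apply Int_part_DS_diff_bounds; assumption.
  - intros [|k] Hk; [lia|]; unfold F.
    rewrite <- tech_pow_Rmult, Rmult_assoc.
    apply Int_part_mul_nat_bounds; lia.
  - intro i; apply Rabs_IZR_sub_Int_part, horner_diff_approx; assumption.
Qed.
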